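(* Suppose the network connectivity assumption and the Poincaré scaling assumption hold, and let $C_\Pi>0$ be a constant (independent of $H$) such that $|v-\Pi_Hv|_M\le C_\Pi H|v|_L$ for all $v\in\hat V$, $H\in\mathcal H$. Let $H\in\mathcal H$, $f\in\hat V$, let $u=\mathcal K^{-1}f$, and let $u_H\in V_H:=\mathcal K^{-1}\mathbb P^0(\mathcal T_H)$ be the Galerkin approximation: $(Ku_H,v_H)=(Mf,v_H)$ for all $v_H\in V_H$. Then $$|u-u_H|_L\le C_\Pi\alpha^{-1}H\,|f-\Pi_Hf|_M\le C_\Pi^2\alpha^{-1}H^2\,|f|_L .$$
   Context: Let $d\in\mathbb N$, $\Omega=[0,1]^d$, and let $\mathcal G=(\mathcal N,\mathcal E)$ be a finite connected graph with at least two nodes, whose nodes $\mathcal N$ are distinct points of $\Omega$. Write $x\sim y$ if $\{x,y\}\in\mathcal E$, and $|x-y|$ for the Euclidean distance. For $\omega\subset\Omega$ let $\mathcal N(\omega)=\mathcal N\cap\omega$. Let $\Gamma\subset\partial\Omega$ with $\mathcal N(\Gamma)\ne\emptyset$. $\hat V$ is the space of real functions on $\mathcal N$ with $(u,v)=\sum_xu(x)v(x)$; $V=\{v\in\hat V:v=0\text{ on }\mathcal N(\Gamma)\}$. Symmetric operators: $(M_xv,w)=\tfrac12\sum_{y\sim x}|x-y|v(x)w(x)$, $(L_xv,w)=\tfrac12\sum_{y\sim x}\frac{(v(x)-v(y))(w(x)-w(y))}{|x-y|}$, $(K_xv,w)=\tfrac12\sum_{y\sim x}\gamma_{xy}\frac{(v(x)-v(y))(w(x)-w(y))}{|x-y|}$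 with $\gamma_{xy}=\gamma_{yx}\in[\alpha,\beta]$, $0<\alpha\le\beta<\infty$; $M=\sum_xM_x$, $L=\sum_xL_x$, $K=\sum_xK_x$; for $\omega\subset\Omega$, $M_\omega=\sum_{x\in\mathcal N(\omega)}M_x$, $L_\omega=\sum_{x\in\mathcal N(\omega)}L_x$. Seminorms $|v|_M^2=(Mv,v)$, $|v|_L^2=(Lv,v)$, $|v|_{M,\omega}^2=(M_\omega v,v)$, $|v|_{L,\omega}^2=(L_\omega v,v)$. The solution operator $\mathcal K^{-1}:\hat V\to V$ maps $f$ to the unique $u\in V$ with $(Ku,v)=(Mf,v)$ for all $v\in V$. Mesh: for $H>0$ with $1/H\in\mathbb N$, $\mathcal T_H$ consists of the cubes $I_1\times\dots\times I_d$, $I_i=[a_i,a_i+H)$, $a_i\in\{0,H,\dots,1-H\}$, except $I_i=[a_i,a_i+H]$ when $a_i+H=1$. $\mathsf N(\omega)$ is the union of all $T\in\mathcal T_H$ with $\overline T\cap\overline\omega\neq\emptyset$. $\mathcal H$ is a finite set of admissible mesh sizes. $\mathbf 1_T$ is the indicator of nodes in $T$; $\mathbb P^0(\mathcal T_H)=\mathrm{span}\{\mathbf 1_T\}$; $\Pi_Hv=\sum_T\frac{(M_Tv,1)}{|1|_{M,T}^2}\mathbf 1_T$ (term $0$ if $T$ has no node). Network connectivity assumption: for every $H\in\mathcal H$ and $T\in\mathcal T_H$ there is a connected subgraph of $\mathcal G$ containing all edges with at least one endpoint in $T$ and only edges with both endpoints in $\mathsf N(T)$. Poincaré scaling assumption: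 there is $\mu>0$ such that for all $H\in\mathcal H$, $T\in\mathcal T_H$, $v\in\hat V$ there exists $c\in\mathbb R$ with $|v-c|_{M,T}\le\mu H|v|_{L,\mathsf N(T)}$. *)

From HB Require Import structures.
From mathcomp Require Import all_boot all_order all_algebra.
From mathcomp Require Import boolp reals.
Set Implicit Arguments. Unset Strict Implicit. Unset Printing Implicit Defensive.
Import Order.TTheory GRing.Theory Num.Theory.
Local Open Scope ring_scope.

Section Network.
Variables (R : realType) (d : nat) (N : finType) (pos : N -> 'I_d -> R)
  (adj : rel N).

Definition dist (x y : N) : R :=
  Num.sqrt (\sum_(i < d) (pos x i - pos y i) ^+ 2).

Definition Mloc (x : N) (v w : N -> R) : R :=
  2^-1 * \sum_(y | adj x y) dist x y * v x * w x.
Definition Lloc (x : N) (v w : N -> R) : R :=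
  2^-1 * \sum_(y | adj x y) (v x - v y) * (w x - w y) / dist x y.
Definition Kloc (gamma : N -> N -> R) (x : N) (v w : N -> R) : R :=
  2^-1 * \sum_(y | adj x y) gamma x y * (v x - v y) * (w x - w y) / dist x y.

Definition Mform (v w : N -> R) : R := \sum_x Mloc x v w.
Definition Lform (v w : N -> R) : R := \sum_x Lloc x v w.
Definition Kform (gamma : N -> N -> R) (v w : N -> R) : R :=
  \sum_x Kloc gamma x v w.
Definition Mform_on (S : pred N) (v w : N -> R) : R :=
  \sum_(x | S x) Mloc x v w.
Definition Lform_on (S : pred N) (v w : N -> R) : R :=
  \sum_(x | S x) Lloc x v w.

Definition semiM (v : N -> R) : R := Num.sqrt (Mform v v).
Definition semiL (v : N -> R) : R := Num.sqrt (Lform v v).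
Definition semiM_on (S : pred N) (v : N -> R) : R := Num.sqrt (Mform_on S v v).
Definition semiL_on (S : pred N) (v : N -> R) : R := Num.sqrt (Lform_on S v v).

(* Mesh T_H with H = 1/n; cubes are indexed by a : 'I_d -> 'I_n,
   T_a = prod_i I_i with I_i = [a_i H, a_i H + H), closed when a_i H + H = 1,
   i.e. when a_i = n - 1. *)
Definition meshH (n : nat) : R := (n%:R)^-1.

Definition in_cube (n : nat) (a : {ffun 'I_d -> 'I_n}) (z : 'I_d -> R) : bool :=
  [forall i, ((a i)%:R * meshH n <= z i) &&
     (if (a i).+1 == n then z i <= (a i)%:R * meshH n + meshH n
      else z i < (a i)%:R * meshH n + meshH n)].

Definition in_closed_cube (n : nat) (a : {ffun 'I_d -> 'I_n}) (z : 'I_d -> R)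
  : bool :=
  [forall i, ((a i)%:R * meshH n <= z i) &&
             (z i <= (a i)%:R * meshH n + meshH n)].

Definition closures_meet (n : nat) (a b : {ffun 'I_d -> 'I_n}) : Prop :=
  exists z : 'I_d -> R, in_closed_cube a z /\ in_closed_cube b z.

Definition node_in_cube (n : nat) (a : {ffun 'I_d -> 'I_n}) : pred N :=
  fun x => in_cube a (pos x).
Definition node_in_patch (n : nat) (a : {ffun 'I_d -> 'I_n}) : pred N :=
  fun x => [exists b, `[< closures_meet a b >] && in_cube b (pos x)].

Definition indic (n : nat) (a : {ffun 'I_d -> 'I_n}) (x : N) : R :=
  (node_in_cube a x)%:R.

Definition P0 (n : nat) (g : N -> R) : Prop :=
  exists c : {ffun 'I_d -> 'I_n} -> R,
    forall x, g x = \sum_a c a * indic a x.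

Definition PiH (n : nat) (v : N -> R) : N -> R := fun x =>
  \sum_(a : {ffun 'I_d -> 'I_n})
    (if [exists y, node_in_cube a y] then
       Mform_on (node_in_cube a) v (fun _ => 1) /
       Mform_on (node_in_cube a) (fun _ => 1) (fun _ => 1)
     else 0) * indic a x.

Variable Gam : ('I_d -> R) -> Prop.
Definition inV (v : N -> R) : Prop := forall x, Gam (pos x) -> v x = 0.

Definition solves (gamma : N -> N -> R) (f u : N -> R) : Prop :=
  inV u /\ forall v, inV v -> Kform gamma u v = Mform f v.

Definition inVH (gamma : N -> N -> R) (n : nat) (w : N -> R) : Prop :=
  exists g, P0 n g /\ solves gamma g w.

(* Network connectivity assumption; the admissible mesh sizes are H = 1/n, n \in Hs *)
Definition network_connectivity (Hs : seq nat) : Prop :=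
  forall n, n \in Hs -> forall a : {ffun 'I_d -> 'I_n},
    exists (S : {set N}) (e : rel N),
      [/\ symmetric e /\ (forall x y, e x y -> adj x y),
          (forall x y, e x y -> x \in S /\ y \in S),
          (forall x y, x \in S -> y \in S -> connect e x y),
          (forall x y, adj x y -> node_in_cube a x || node_in_cube a y -> e x y)
        & (forall x y, e x y -> node_in_patch a x && node_in_patch a y)].

Definition poincare_scaling (Hs : seq nat) : Prop :=
  exists mu : R, 0 < mu /\
    forall n, n \in Hs -> forall (a : {ffun 'I_d -> 'I_n}) (v : N -> R),
      exists c : R,
        semiM_on (node_in_cube a) (fun x => v x - c)
          <= mu * meshH n * semiL_on (node_in_patch a) v.

End Network.

(* Write e = u - uH.  Galerkin orthogonality makes e M-orthogonal to every
   piecewise constant function whose discrete solution exists, and such solutions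
   always exist: K is coercive on V because the graph is connected and Gamma
   contains a node.  Since Pi_H is the M-orthogonal projection onto piecewise
   constants, (K e, e) = (M f, e) = (M (f - Pi_H f), e - Pi_H e).  Coercivity,
   Cauchy-Schwarz and the approximation property of Pi_H applied to e give
   alpha |e|_L^2 <= |f - Pi_H f|_M C_Pi H |e|_L; the second bound is the
   approximation property applied to f. *)
From HB Require Import structures.
From mathcomp Require Import all_boot all_order all_algebra.
From mathcomp Require Import boolp reals.
From mathcomp Require Import ring lra.
Import Order.TTheory GRing.Theory Num.Theory.
Local Open Scope ring_scope.
Set Implicit Arguments. Unset Strict Implicit. Unset Printing Implicit Defensive.

Definition dirac {R : pzRingType} {N : eqType} (y : N) : N -> R := fun z => (y == z)%:R.

Section BilinearForm.
Variables (R : rcfType) (N : finType) (B : (N -> R) -> (N -> R) -> R).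
Hypothesis B_linear :
  forall (a : R) u v w, B (fun x => a * u x + v x) w = a * B u w + B v w.
Hypothesis B_sym : forall u v, B u v = B v u.

Lemma form0l w : B (fun=> 0) w = 0.
Proof.
have := B_linear 1 (fun=> 0) (fun=> 0) w.
under [fun _ => _]funext do rewrite mulr0 addr0.
by rewrite mul1r; lra.
Qed.

Lemma formBl u v w : B (fun x => u x - v x) w = B u w - B v w.
Proof.
rewrite addrC -mulN1r -B_linear; congr B; apply: funext => x.
by rewrite mulN1r addrC.
Qed.

Lemma formBr u v w : B w (fun x => u x - v x) = B w u - B w v.
Proof. by rewrite B_sym formBl !(B_sym w). Qed.

Lemma form_suml (I : Type) (s : seq I) (c : I -> R) (g : I -> N -> R) w :
  B (fun z => \sum_(i <- s) c i * g i z) w = \sum_(i <- s) c i * B (g i) w.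
Proof.
elim: s => [|i s IH].
  by under [fun _ => _]funext do rewrite big_nil; rewrite big_nil form0l.
rewrite big_cons -IH -B_linear; congr B; apply: funext => z.
by rewrite big_cons.
Qed.

Lemma form_sumr (I : Type) (s : seq I) (c : I -> R) (g : I -> N -> R) u :
  B u (fun z => \sum_(i <- s) c i * g i z) = \sum_(i <- s) c i * B u (g i).
Proof. by rewrite B_sym form_suml; apply: eq_bigr => i _; rewrite B_sym. Qed.

Lemma fun_dirac_expand (v : N -> R) : v = (fun z => \sum_y v y * dirac y z).
Proof.
apply: funext => z; rewrite (bigD1 z) //= /dirac eqxx mulr1 big1 ?addr0 //.
by move=> y /negbTE; rewrite eq_sym => ->; rewrite mulr0.
Qed.

Lemma form_dirac_expandl u v : B u v = \sum_y u y * B (dirac y) v.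
Proof. by rewrite {1}(fun_dirac_expand u) form_suml. Qed.

Lemma form_dirac_expandr u v : B u v = \sum_y v y * B u (dirac y).
Proof. by rewrite {1}(fun_dirac_expand v) form_sumr. Qed.

Hypothesis B_psd : forall u, 0 <= B u u.

Lemma form_cauchy_schwarz u v : B u v <= Num.sqrt (B u u) * Num.sqrt (B v v).
Proof.
set p := B u u; set q := B v v; set r := B u v.
have quad t : 0 <= p - 2 * t * r + t ^+ 2 * q.
  have := B_psd (fun x => - t * v x + u x).
  rewrite B_linear !(B_sym _ (fun x => - t * v x + u x)) !B_linear.
  by rewrite -/p -/q -/r (B_sym v u) -/r; congr (_ <= _); ring.
have [r_le0|r_gt0] := lerP r 0.
  by apply: le_trans r_le0 _; rewrite mulr_ge0 ?sqrtr_ge0.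
rewrite -sqrtrM ?B_psd // -(ger0_norm (ltW r_gt0)) -sqrtr_sqr ler_wsqrtr //.
have [q0|q_neq0] := eqVneq q 0.
  (* the quadratic degenerates to a line of negative slope [-2 r] *)
  have := quad ((p + 1) / (2 * r)); rewrite q0 mulr0 addr0.
  have -> : 2 * ((p + 1) / (2 * r)) * r = p + 1 by field; rewrite gt_eqF.
  lra.
have q_gt0 : 0 < q by rewrite lt_def q_neq0 B_psd.
have := quad (r / q).
have -> : p - 2 * (r / q) * r + (r / q) ^+ 2 * q = p - r ^+ 2 / q by field.
by rewrite subr_ge0 ler_pdivrMr // mulrC.
Qed.

End BilinearForm.

Section NetworkForms.
Variables (R : realType) (d : nat) (N : finType) (pos : N -> 'I_d -> R)
  (adj : rel N).

Local Notation dist := (dist pos).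
Local Notation Mform := (Mform pos adj).
Local Notation Lform := (Lform pos adj).
Local Notation Kform := (Kform pos adj).

Lemma Mform_linear (a : R) u v w :
  Mform (fun x => a * u x + v x) w = a * Mform u w + Mform v w.
Proof.
rewrite /Mform /Mloc mulr_sumr -big_split; apply: eq_bigr => x _ /=.
by rewrite !mulr_sumr -!big_split; apply: eq_bigr => y _ /=; ring.
Qed.

Lemma Mform_sym u v : Mform u v = Mform v u.
Proof. by apply: eq_bigr => x _; congr (_ * _); apply: eq_bigr => y _; ring. Qed.

Lemma Kform_linear gamma (a : R) u v w :
  Kform gamma (fun x => a * u x + v x) w = a * Kform gamma u w + Kform gamma v w.
Proof.
rewrite /Kform /Kloc mulr_sumr -big_split; apply: eq_bigr => x _ /=.
by rewrite !mulr_sumr -!big_split; apply: eq_bigr => y _ /=; ring.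
Qed.

Lemma Kform_sym gamma u v : Kform gamma u v = Kform gamma v u.
Proof. by apply: eq_bigr => x _; congr (_ * _); apply: eq_bigr => y _; ring. Qed.

Lemma dist_ge0 x y : 0 <= dist x y.
Proof. exact: sqrtr_ge0. Qed.

Lemma dist_gt0 : injective pos -> forall x y, x != y -> 0 < dist x y.
Proof.
move=> pos_inj x y xy; rewrite sqrtr_gt0 lt_def sumr_ge0 ?andbT; last first.
  by move=> i _; rewrite sqr_ge0.
apply: contra xy => /eqP/psumr_eq0P sum0; apply/eqP/pos_inj/funext => i.
by apply/eqP; rewrite -subr_eq0 -sqrf_eq0 sum0 // => j _; rewrite sqr_ge0.
Qed.

Lemma Lloc_ge0 x u : 0 <= Lloc pos adj x u u.
Proof.
rewrite mulr_ge0 ?invr_ge0 ?ler0n // sumr_ge0 // => y _.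
by rewrite divr_ge0 ?dist_ge0 // -expr2 sqr_ge0.
Qed.

Lemma Lform_ge0 u : 0 <= Lform u u.
Proof. by rewrite sumr_ge0 // => x _; rewrite Lloc_ge0. Qed.

Lemma Mform_ge0 u : 0 <= Mform u u.
Proof.
rewrite sumr_ge0 // => x _; rewrite mulr_ge0 ?invr_ge0 ?ler0n // sumr_ge0 // => y _.
by rewrite -mulrA mulr_ge0 ?dist_ge0 // -expr2 sqr_ge0.
Qed.

Lemma Kform_ge_Lform gamma (alpha : R) :
  (forall x y, adj x y -> alpha <= gamma x y) ->
  forall u, alpha * Lform u u <= Kform gamma u u.
Proof.
move=> gamma_ge u; rewrite /Lform /Kform mulr_sumr; apply: ler_sum => x _.
rewrite /Lloc /Kloc mulrCA ler_wpM2l ?invr_ge0 ?ler0n // mulr_sumr.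
apply: ler_sum => y xy; rewrite -!mulrA ler_wpM2r ?gamma_ge //.
by rewrite mulrA -expr2 divr_ge0 ?sqr_ge0 ?dist_ge0.
Qed.

Lemma Lform_eq0_adj u : injective pos -> irreflexive adj ->
  Lform u u = 0 -> forall x y, adj x y -> u x = u y.
Proof.
move=> pos_inj adj_irr L0 x y xy.
have /eqP := psumr_eq0P (fun x _ => Lloc_ge0 x u) L0 (i := x) isT.
rewrite mulf_eq0 invr_eq0 pnatr_eq0 /= => /eqP/psumr_eq0P term0.
have /eqP := term0 (fun z _ => divr_ge0 (sqr_ge0 _) (dist_ge0 x z)) y xy.
have x_neq_y : x != y by apply: contraTneq xy => ->; rewrite adj_irr.
rewrite mulf_eq0 invr_eq0 (gt_eqF (dist_gt0 pos_inj x_neq_y)) orbF.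
by rewrite mulf_eq0 orbb subr_eq0 => /eqP.
Qed.

Definition node_weight (x : N) : R := 2^-1 * \sum_(y | adj x y) dist x y.

Lemma node_weight_ge0 x : 0 <= node_weight x.
Proof. by rewrite mulr_ge0 ?invr_ge0 ?ler0n // sumr_ge0 // => y _; exact: dist_ge0. Qed.

Lemma MlocE x v w : Mloc pos adj x v w = node_weight x * v x * w x.
Proof.
rewrite /Mloc /node_weight -!mulrA mulr_suml; congr (_ * _).
by apply: eq_bigr => y _; ring.
Qed.

End NetworkForms.

Section MeshProjection.
Variables (R : realType) (d : nat) (N : finType) (pos : N -> 'I_d -> R)
  (adj : rel N) (n : nat).

Local Notation cube := {ffun 'I_d -> 'I_n}.

Lemma meshH_gt0 : (0 < n)%N -> 0 < meshH R n.
Proof. by move=> n_gt0; rewrite invr_gt0 ltr0n. Qed.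

Lemma in_cube_uniq (a b : cube) (z : 'I_d -> R) :
  in_cube a z -> in_cube b z -> a = b.
Proof.
move=> za zb; apply/ffunP => i; apply/val_inj => /=.
have H_gt0 : 0 < meshH R n := meshH_gt0 (leq_ltn_trans (leq0n _) (ltn_ord (a i))).
(* the cell of a lower index ends where the next one starts *)
have cells_disjoint (c e : cube) :
    (c i < e i)%N -> in_cube c z -> in_cube e z -> False.
  move=> lt_ce /forallP/(_ i)/andP[_] + /forallP/(_ i)/andP[ze _].
  rewrite ltn_eqF; last exact: leq_ltn_trans lt_ce (ltn_ord (e i)).
  have : (c i).+1%:R * meshH R n <= (e i)%:R * meshH R n.
    by rewrite ler_pM2r // ler_nat.
  rewrite -natr1 mulrDl mul1r; lra.
case: (ltngtP (a i) (b i)) => // lt_ab; first by case: (cells_disjoint a b lt_ab).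
by case: (cells_disjoint b a lt_ab).
Qed.

Definition PiH_coef (h : N -> R) (a : cube) : R :=
  if [exists y, node_in_cube pos a y] then
    Mform_on pos adj (node_in_cube pos a) h (fun=> 1) /
    Mform_on pos adj (node_in_cube pos a) (fun=> 1) (fun=> 1)
  else 0.

Lemma PiH_P0 h : P0 pos n (PiH pos adj n h).
Proof. by exists (PiH_coef h). Qed.

Lemma PiH_in_cube h (a : cube) x :
  node_in_cube pos a x -> PiH pos adj n h x = PiH_coef h a.
Proof.
move=> xa; rewrite /PiH (bigD1 a) //= /indic xa mulr1 big1 ?addr0 // => b ba.
rewrite [node_in_cube _ _ _](contraNF _ ba) ?mulr0 // => xb.
by rewrite (in_cube_uniq xb xa).
Qed.

Lemma Mform_PiH_residual_indic h (a : cube) :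
  Mform pos adj (fun x => h x - PiH pos adj n h x) (indic pos a) = 0.
Proof.
rewrite /Mform (bigID (node_in_cube pos a)) /= [X in _ + X]big1 ?addr0; last first.
  by move=> x /negbTE xa; rewrite MlocE /indic xa mulr0.
under eq_bigr => x xa do rewrite MlocE (PiH_in_cube h xa) /indic xa mulr1 mulrBr.
rewrite sumrB -mulr_suml /PiH_coef; case: ifPn => [_|/existsPn no_node]; last first.
  by rewrite mulr0 subr0 big1 // => x xa; move: (no_node x); rewrite xa.
set Wa := \sum_(x | _) node_weight pos adj x.
set Wh := \sum_(x | _) node_weight pos adj x * h x.
have -> : Mform_on pos adj (node_in_cube pos a) h (fun=> 1) = Wh.
  by apply: eq_bigr => x _; rewrite MlocE mulr1.
have -> : Mform_on pos adj (node_in_cube pos a) (fun=> 1) (fun=> 1) = Wa.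
  by apply: eq_bigr => x _; rewrite MlocE !mulr1.
(* [Wh / 0 = 0] is harmless: all weights on the cube then vanish *)
have [Wa0|Wa_neq0] := eqVneq Wa 0; last by rewrite mulrC divfK ?subrr.
rewrite Wa0 mul0r subr0; apply: big1 => x xa.
by rewrite (psumr_eq0P (fun y _ => node_weight_ge0 pos adj y) Wa0 xa) mul0r.
Qed.

Lemma Mform_PiH_residual_P0 h g : P0 pos n g ->
  Mform pos adj (fun x => h x - PiH pos adj n h x) g = 0.
Proof.
move=> [c gE]; have -> : g = (fun x => \sum_(a <- index_enum _) c a * indic pos a x).
  by apply: funext => x; rewrite gE.
rewrite (form_sumr (Mform_linear pos adj) (Mform_sym pos adj)).
by rewrite big1 // => a _; rewrite Mform_PiH_residual_indic mulr0.
Qed.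

End MeshProjection.

Lemma linear_injective_surjective (R : fieldType) (N : finType)
    (F : (N -> R) -> N -> R) :
  (forall u y, F u y = \sum_x u x * F (dirac x) y) ->
  (forall u, (forall y, F u y = 0) -> forall y, u y = 0) ->
  forall b, exists u, forall y, F u y = b y.
Proof.
move=> F_lin F_inj b.
pose A : 'M[R]_#|N| := \matrix_(i, j) F (dirac (enum_val i)) (enum_val j).
pose fun_of_row (r : 'rV[R]_#|N|) : N -> R := fun x => r 0 (enum_rank x).
have F_row r y : F (fun_of_row r) y = (r *m A) 0 (enum_rank y).
  rewrite F_lin mxE (reindex (@enum_rank N)) /=; last exact: onW_bij (enum_rank_bij N).
  by apply: eq_bigr => x _; rewrite mxE !enum_rankK.
have A_unit : A \in unitmx.
  rewrite unitmxE unitfE; apply/negP => /det0P [r r_neq0 rA0].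
  have r0 y : fun_of_row r y = 0 by apply: F_inj => {}y; rewrite F_row rA0 mxE.
  move/eqP: r_neq0; apply; apply/rowP => i.
  by rewrite mxE -(r0 (enum_val i)) /fun_of_row enum_valK.
exists (fun_of_row ((\row_j b (enum_val j)) *m invmx A)) => y.
by rewrite F_row mulmxKV // mxE enum_rankK.
Qed.

Section Solvability.
Variables (R : realType) (d : nat) (N : finType) (pos : N -> 'I_d -> R)
  (adj : rel N) (Gam : ('I_d -> R) -> Prop) (gamma : N -> N -> R) (alpha : R).
Hypotheses (pos_inj : injective pos) (adj_irr : irreflexive adj)
  (adj_connected : forall x y, connect adj x y) (Gam_node : exists x, Gam (pos x))
  (alpha_gt0 : 0 < alpha) (gamma_ge : forall x y, adj x y -> alpha <= gamma x y).

Local Notation Kform := (Kform pos adj gamma).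

(* [solves f u] says that [dirichlet_op u] is [0] on the nodes of Gamma and
   [(M f, dirac y)] at every other node [y]. *)
Definition dirichlet_op (u : N -> R) (y : N) : R :=
  if `[< Gam (pos y) >] then u y else Kform u (dirac y).

Lemma dirichlet_op_expand u y : dirichlet_op u y = \sum_x u x * dirichlet_op (dirac x) y.
Proof.
rewrite /dirichlet_op; case: asboolP => _; first by rewrite {1}(fun_dirac_expand u).
exact: (form_dirac_expandl (Kform_linear pos adj gamma)).
Qed.

Lemma dirichlet_op_eq0 u : (forall y, dirichlet_op u y = 0) -> forall y, u y = 0.
Proof.
move=> u_ker.
have uV x : Gam (pos x) -> u x = 0.
  by move=> xGam; have := u_ker x; rewrite /dirichlet_op asboolT.
have K0 : Kform u u = 0.
  rewrite (form_dirac_expandr (Kform_linear _ _ _) (Kform_sym _ _ _)) big1 // => y _.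
  have [/uV ->|yGam] := asboolP (Gam (pos y)); first by rewrite mul0r.
  by have := u_ker y; rewrite /dirichlet_op asboolF // => ->; rewrite mulr0.
have L0 : Lform pos adj u u = 0.
  apply/eqP; rewrite eq_le Lform_ge0 andbT -(pmulr_rle0 _ alpha_gt0) -K0.
  exact: Kform_ge_Lform.
have u_adj := Lform_eq0_adj pos_inj adj_irr L0.
have u_path p x : path adj x p -> u (last x p) = u x.
  by elim: p x => [//|z p IH] x /= /andP[xz zp]; rewrite IH // (u_adj _ _ xz).
case: Gam_node => x0 x0Gam y; case/connectP: (adj_connected x0 y) => p p_path ->.
by rewrite u_path // uV.
Qed.

Lemma solves_exists f : exists u, solves pos adj Gam gamma f u.
Proof.
pose b y := if `[< Gam (pos y) >] then 0 else Mform pos adj f (dirac y).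
have [u u_sol] := linear_injective_surjective dirichlet_op_expand dirichlet_op_eq0 b.
exists u; split=> [x xGam|v vV].
  by have := u_sol x; rewrite /dirichlet_op /b asboolT.
rewrite (form_dirac_expandr (Kform_linear _ _ _) (Kform_sym _ _ _)).
rewrite (form_dirac_expandr (Mform_linear pos adj) (Mform_sym pos adj)).
apply: eq_bigr => y _.
have [/vV ->|yGam] := asboolP (Gam (pos y)); first by rewrite !mul0r.
by have := u_sol y; rewrite /dirichlet_op /b asboolF // => ->.
Qed.

End Solvability.

Lemma ler_divl_of_mul_sqr_le (R : realFieldType) (alpha C X : R) :
  0 < alpha -> 0 <= C -> 0 <= X -> alpha * X ^+ 2 <= C * X -> X <= alpha^-1 * C.
Proof.
move=> alpha_gt0 C_ge0 X_ge0 le_sqr.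
have [->|X_neq0] := eqVneq X 0; first by rewrite mulr_ge0 // invr_ge0 ltW.
have X_gt0 : 0 < X by rewrite lt_def X_neq0.
rewrite mulrC ler_pdivlMr // mulrC -(ler_pM2r X_gt0); apply: le_trans le_sqr.
by rewrite -mulrA -expr2.
Qed.

Section GalerkinError.
Variables (R : realType) (d : nat) (N : finType) (pos : N -> 'I_d -> R)
  (adj : rel N) (Gam : ('I_d -> R) -> Prop) (gamma : N -> N -> R) (n : nat)
  (f u uH : N -> R).
Hypotheses (u_sol : solves pos adj Gam gamma f u)
  (uH_VH : inVH pos adj Gam gamma n uH)
  (uH_galerkin : forall vH, inVH pos adj Gam gamma n vH ->
     Kform pos adj gamma uH vH = Mform pos adj f vH).

Local Notation Mform := (Mform pos adj).
Local Notation Kform := (Kform pos adj gamma).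
Local Notation PiH := (PiH pos adj n).
Local Notation e := (fun x => u x - uH x).

Let Kl := Kform_linear pos adj gamma.
Let Ks := Kform_sym pos adj gamma.
Let Ml := Mform_linear pos adj.
Let Ms := Mform_sym pos adj.

Lemma error_in_V : inV pos Gam e.
Proof.
case: u_sol uH_VH => uV _ [g [_ [uHV _]]] x xGam.
by rewrite uV // uHV // subr0.
Qed.

Lemma galerkin_orthogonality q w :
  P0 pos n q -> solves pos adj Gam gamma q w -> Mform q e = 0.
Proof.
move=> q_P0 [wV w_sol]; case: u_sol => _ u_eq.
rewrite -(w_sol _ error_in_V) (formBr Kl Ks) (Ks w u) (Ks w uH).
by rewrite u_eq // uH_galerkin ?subrr //; exists q.
Qed.

Lemma galerkin_error_energy :
  (exists w, solves pos adj Gam gamma (PiH f) w) ->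
  Kform e e = Mform (fun x => f x - PiH f x) (fun x => e x - PiH e x).
Proof.
move=> [w w_sol]; case: u_sol uH_VH => _ u_eq [g [g_P0 [uHV uH_eq]]].
have e_orth_g : Mform g e = 0 := galerkin_orthogonality g_P0 (conj uHV uH_eq).
have e_orth_Pif : Mform (PiH f) e = 0.
  exact: galerkin_orthogonality (PiH_P0 _ _ _ _) w_sol.
rewrite (formBr Ml Ms) [X in _ - X]Mform_PiH_residual_P0 ?subr0; last exact: PiH_P0.
rewrite (formBl Ml) e_orth_Pif subr0.
have eV := error_in_V.
by rewrite (formBl Kl) u_eq ?uH_eq // e_orth_g subr0.
Qed.

Lemma galerkin_error_bound (alpha CPi : R) :
  0 < alpha -> 0 <= CPi -> (0 < n)%N ->
  (forall x y, adj x y -> alpha <= gamma x y) ->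
  (exists w, solves pos adj Gam gamma (PiH f) w) ->
  semiM pos adj (fun x => e x - PiH e x) <= CPi * meshH R n * semiL pos adj e ->
  semiL pos adj e <= CPi * alpha^-1 * meshH R n * semiM pos adj (fun x => f x - PiH f x).
Proof.
move=> alpha_gt0 CPi_ge0 n_gt0 gamma_ge Pif_solvable e_approx.
set S := semiM pos adj _; set X := semiL pos adj e.
have -> : CPi * alpha^-1 * meshH R n * S = alpha^-1 * (CPi * meshH R n * S) by ring.
apply: ler_divl_of_mul_sqr_le; rewrite ?sqrtr_ge0 //.
  by rewrite !mulr_ge0 ?sqrtr_ge0 // ltW // meshH_gt0.
rewrite [X ^+ 2]sqr_sqrtr ?Lform_ge0 //.
apply: le_trans (Kform_ge_Lform pos gamma_ge e) _.
rewrite galerkin_error_energy //.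
apply: le_trans (form_cauchy_schwarz Ml Ms (Mform_ge0 pos adj) _ _) _.
have -> : CPi * meshH R n * S * X = CPi * meshH R n * X * S by ring.
by rewrite [_ * semiM _ _ _]mulrC ler_wpM2r ?sqrtr_ge0.
Qed.

End GalerkinError.

(* The Poincare scaling and network connectivity assumptions are what the paper
   uses to establish the bound CPi on Pi_H, which is assumed directly here. *)
Theorem mainTheorem5 (R : realType) (d : nat) (N : finType)
  (pos : N -> 'I_d -> R) (adj : rel N) (Gam : ('I_d -> R) -> Prop)
  (gamma : N -> N -> R) (alpha beta : R) (Hs : seq nat) (CPi : R) :
  (* graph: nodes are distinct points of [0,1]^d, at least two nodes,
     undirected simple connected graph *)
  injective pos ->
  (forall x i, 0 <= pos x i <= 1) ->
  (1 < #|N|)%N ->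
  symmetric adj -> irreflexive adj ->
  (forall x y, connect adj x y) ->
  (* Gamma is a subset of the boundary of [0,1]^d with N(Gamma) nonempty *)
  (forall z, Gam z -> (forall i, 0 <= z i <= 1) /\ exists i, z i = 0 \/ z i = 1) ->
  (exists x, Gam (pos x)) ->
  (* coefficients *)
  0 < alpha -> alpha <= beta ->
  (forall x y, gamma x y = gamma y x) ->
  (forall x y, adj x y -> alpha <= gamma x y <= beta) ->
  (* admissible mesh sizes H = 1/n *)
  (forall n, n \in Hs -> (0 < n)%N) ->
  network_connectivity pos adj Hs ->
  poincare_scaling pos adj Hs ->
  0 < CPi ->
  (forall (n : nat) (v : N -> R), n \in Hs ->
     semiM pos adj (fun x => v x - PiH pos adj n v x)
       <= CPi * meshH R n * semiL pos adj v) ->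
  forall (n : nat) (f u uH : N -> R),
    n \in Hs ->
    solves pos adj Gam gamma f u ->
    inVH pos adj Gam gamma n uH ->
    (forall vH, inVH pos adj Gam gamma n vH ->
       Kform pos adj gamma uH vH = Mform pos adj f vH) ->
    semiL pos adj (fun x => u x - uH x)
      <= CPi * alpha^-1 * meshH R n * semiM pos adj (fun x => f x - PiH pos adj n f x)
    /\ CPi * alpha^-1 * meshH R n * semiM pos adj (fun x => f x - PiH pos adj n f x)
      <= CPi ^+ 2 * alpha^-1 * meshH R n ^+ 2 * semiL pos adj f.
Proof.
move=> pos_inj _ _ _ adj_irr adj_connected _ Gam_node alpha_gt0 _ _ gamma_bounds
  Hs_gt0 _ _ CPi_gt0 PiH_approx n f u uH nHs u_sol uH_VH uH_galerkin.
have gamma_ge x y : adj x y -> alpha <= gamma x y by move/gamma_bounds/andP=> [].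
split.
  apply: (galerkin_error_bound u_sol uH_VH uH_galerkin) => //.
  - exact: ltW.
  - exact: Hs_gt0.
  - exact: solves_exists pos_inj adj_irr adj_connected Gam_node alpha_gt0 gamma_ge _.
  - exact: PiH_approx.
have -> : CPi ^+ 2 * alpha^-1 * meshH R n ^+ 2 * semiL pos adj f
    = CPi * alpha^-1 * meshH R n * (CPi * meshH R n * semiL pos adj f) by ring.
have H_gt0 : 0 < meshH R n := meshH_gt0 R (Hs_gt0 n nHs).
by rewrite ler_wpM2l ?PiH_approx // !mulr_ge0 ?invr_ge0 // ltW.
Qed.
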